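(* Let $k,l\ge1$ with $k\ne l$, $1\le r\le4kl$, and let $\overline{\mathcal{B}}(2k,2l;r)$ be the set of boards in $\mathcal{B}(2k,2l;r)$ whose board partition $(\lambda_1,\lambda_2,\lambda_3,\lambda_4)$ satisfies: $\lambda_1\ge\lambda_i$ for all $i>1$; if $\lambda_1=\lambda_2$ then $\lambda_3\ge\lambda_4$; if $\lambda_1=\lambda_3$ then $\lambda_2\ge\lambda_4$; if $\lambda_1=\lambda_4$ then $\lambda_2\ge\lambda_3$. For a board partition of a board in $\overline{\mathcal{B}}(2k,2l;r)$, let $K\le\langle H,V\rangle$ be the subgroup of symmetries preserving the set of all boards with that board partition. Then: if $\lambda_1=\lambda_2=\lambda_3=\lambda_4$, $K=\langle H,V\rangle$ and $[\langle H,V\rangle:K]=1$; if $\lambda_1=\lambda_2>\lambda_3=\lambda_4$, $K=\langle V\rangle$ and the index is 2; if $\lambda_1=\lambda_3>\lambda_2=\lambda_4$, $K=\langle R_{180}\rangle$ and the index is 2; if $\lambda_1=\lambda_4>\lambda_2=\lambda_3$, $K=\langle H\rangle$ and the index is 2; in all other cases $K$ is trivial and the index is 4.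
   Context: A $2k\times2l$ grid ($2k$ rows numbered top to bottom, $2l$ columns left to right); $\mathcal{B}(2k,2l;r)$ is the set of boards, i.e. subsets of exactly $r$ blocked cells. $\langle H,V\rangle=\{R_0,H,V,R_{180}\}$ acts on boards, where $H$ is reflection across the horizontal midline (swapping top and bottom), $V$ reflection across the vertical midline (swapping left and right), $R_{180}$ the 180-degree rotation. Quadrants: $Q_1$ = rows $1..k$, cols $1..l$; $Q_2$ = rows $1..k$, cols $l+1..2l$; $Q_3$ = rows $k+1..2k$, cols $l+1..2l$; $Q_4$ = rows $k+1..2k$, cols $1..l$; the board partition is $(\lambda_1,\dots,\lambda_4)$ with $\lambda_i$ the number of blocked cells in $Q_i$. *)

From mathcomp Require Import all_boot all_fingroup.
Set Implicit Arguments. Unset Strict Implicit. Unset Printing Implicit Defensive.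
Import GroupScope.

(* Cells of the 2k x 2l grid; rows and columns are 0-indexed:
   row i : 'I_(2k) corresponds to paper row i+1, column j to paper column j+1. *)
Definition cell (k l : nat) := ('I_(2 * k) * 'I_(2 * l))%type.

Definition hflip k l (c : cell k l) : cell k l := (rev_ord c.1, c.2).
Definition vflip k l (c : cell k l) : cell k l := (c.1, rev_ord c.2).

Lemma hflip_inj k l : injective (@hflip k l).
Proof. move=> [a b] [c d] /(congr1 (fun x => (rev_ord x.1, x.2))) /=.
by rewrite !rev_ordK. Qed.
Lemma vflip_inj k l : injective (@vflip k l).
Proof. move=> [a b] [c d] /(congr1 (fun x => (x.1, rev_ord x.2))) /=.
by rewrite !rev_ordK. Qed.

Definition Hs k l : {perm cell k l} := perm (@hflip_inj k l).
Definition Vs k l : {perm cell k l} := perm (@vflip_inj k l).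
Definition R180 k l : {perm cell k l} := Hs k l * Vs k l.

Definition HV k l : {set {perm cell k l}} := <<[set Hs k l; Vs k l]>>.

(* A board: a set of blocked cells. B(2k,2l;r) = boards with exactly r cells. *)
Definition board k l := {set cell k l}.
Definition is_board k l r (B : board k l) : bool := #|B| == r.

Definition act_board k l (g : {perm cell k l}) (B : board k l) : board k l :=
  [set g c | c in B].

Definition Q1 k l : {set cell k l} := [set c : cell k l | (c.1 < k)%N && (c.2 < l)%N].
Definition Q2 k l : {set cell k l} := [set c : cell k l | (c.1 < k)%N && (l <= c.2)%N].
Definition Q3 k l : {set cell k l} := [set c : cell k l | (k <= c.1)%N && (l <= c.2)%N].
Definition Q4 k l : {set cell k l} := [set c : cell k l | (k <= c.1)%N && (c.2 < l)%N].

Definition board_partition k l (B : board k l) : nat * nat * nat * nat :=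
  (#|B :&: Q1 k l|, #|B :&: Q2 k l|, #|B :&: Q3 k l|, #|B :&: Q4 k l|).

Definition normalized_partition (p : nat * nat * nat * nat) : bool :=
  let: (l1, l2, l3, l4) := p in
  [&& (l2 <= l1)%N, (l3 <= l1)%N, (l4 <= l1)%N,
      (l1 == l2) ==> (l4 <= l3)%N,
      (l1 == l3) ==> (l4 <= l2)%N &
      (l1 == l4) ==> (l3 <= l2)%N].

Definition in_Bbar k l r (B : board k l) : bool :=
  is_board r B && normalized_partition (board_partition B).

Definition boards_with_partition k l (p : nat * nat * nat * nat) : {set board k l} :=
  [set B : board k l | board_partition B == p].

Definition Kstab k l (p : nat * nat * nat * nat) : {set {perm cell k l}} :=
  [set g in HV k l |
     [set act_board g B | B in boards_with_partition k l p]
       == boards_with_partition k l p].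

From mathcomp Require Import all_boot all_fingroup cyclic zify.
Set Implicit Arguments.
Unset Strict Implicit.
Unset Printing Implicit Defensive.
Import GroupScope.

(* The group <H,V> is the Klein four-group {1, H, V, R180}.  Each of its
   elements permutes the quadrants, hence acts on board partitions by a fixed
   permutation of the coordinates, and maps the boards with partition p
   bijectively onto those with the permuted partition.  As the class of B is
   nonempty, a symmetry preserves it exactly when it fixes p, so K is read off
   from which of the equalities l1 = l4 /\ l2 = l3, l1 = l2 /\ l3 = l4,
   l1 = l3 /\ l2 = l4 hold, and #|G : K| = 4 / #|K|. *)

Section KleinFourGroup.
Variables (gT : finGroupType) (x y : gT).
Hypotheses (xx : x * x = 1) (yy : y * y = 1) (cxy : commute x y).

Lemma klein_group_set : group_set [set 1; x; y; x * y].
Proof.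
have xxy : x * (x * y) = y by rewrite mulgA xx mul1g.
have yxy : y * (x * y) = x by rewrite mulgA -cxy -mulgA yy mulg1.
have xyx : x * y * x = y by rewrite -mulgA -cxy xxy.
have xyy : x * y * y = x by rewrite -mulgA yy mulg1.
have xyxy : x * y * (x * y) = 1 by rewrite mulgA xyx yy.
apply/andP; split; first by rewrite !inE eqxx.
apply/subsetP => _ /mulsgP[a b Sa Sb ->]; move: Sa Sb; rewrite !inE -!orbA.
by case/or4P=> /eqP-> /or4P[] /eqP->;
  rewrite ?mul1g ?mulg1 ?xx ?yy ?xxy ?yxy ?xyx ?xyy ?xyxy -?cxy ?eqxx ?orbT.
Qed.

Lemma gen_klein : <<[set x; y]>> = [set 1; x; y; x * y].
Proof.
have Gx : x \in <<[set x; y]>> by rewrite mem_gen // !inE eqxx.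
have Gy : y \in <<[set x; y]>> by rewrite mem_gen // !inE eqxx orbT.
apply/eqP; rewrite eqEsubset -{1}(gen_set_id klein_group_set) genS /=.
  by apply/subsetP => z; rewrite !inE -!orbA => /or4P[] /eqP->; rewrite ?group1 ?groupM.
by apply/subsetP => z; rewrite !inE => /orP[]->; rewrite ?orbT.
Qed.

Lemma mulg_involution_neq1 : x != y -> x * y != 1.
Proof. by rewrite -eq_invg_mul -[x^-1]mulg1 -xx mulKg. Qed.

Lemma card_klein : x != 1 -> y != 1 -> x != y -> #|[set 1; x; y; x * y]| = 4.
Proof.
move=> x1 y1 xy; have xy1 := mulg_involution_neq1 xy.
have xyx : x * y != x by rewrite -{2}[x]mulg1 (inj_eq (mulgI x)).
have xyy : x * y != y by rewrite -{2}[y]mul1g (inj_eq (mulIg y)).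
have -> : [set 1; x; y; x * y] = 1 |: (x |: (y |: [set x * y])).
  by apply/setP => z; rewrite !inE -!orbA.
rewrite !cardsU1 cards1 !inE !negb_or.
by rewrite ![1 == _]eq_sym ![x == x * y]eq_sym ![y == x * y]eq_sym x1 y1 xy xy1 xyx xyy.
Qed.

End KleinFourGroup.

Lemma order_involution (gT : finGroupType) (x : gT) :
  x * x = 1 -> x != 1 -> #[x] = 2.
Proof.
by move=> xx x1; apply/eqP; rewrite eqn_leq order_inf ?expg2 ?xx // order_gt1.
Qed.

Lemma cycle_involution (gT : finGroupType) (x : gT) :
  x * x = 1 -> x != 1 -> <[x]> = [set 1; x].
Proof. by move=> xx x1; rewrite cycle2g // order_involution. Qed.

Lemma indexg_involution_cycle (gT : finGroupType) (G : {group gT}) x :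
  x \in G -> x * x = 1 -> x != 1 -> #|G| = 4 -> #|G : <[x]>| = 2.
Proof.
move=> Gx xx x1 oG.
by rewrite -divgS ?cycle_subG // oG -orderE order_involution.
Qed.

Lemma card_imsetI_preimset (T : finType) (f : T -> T) :
  injective f -> forall X A : {set T}, #|f @: X :&: A| = #|X :&: f @^-1: A|.
Proof.
move=> f_inj X A; rewrite -[RHS](card_imset _ f_inj); apply: eq_card => c.
apply/setIP/imsetP => [[/imsetP[a Xa ->] fA] | [a]].
  by exists a; rewrite // inE Xa inE.
by rewrite !inE => /andP[Xa fA] ->; rewrite mem_imset.
Qed.

Lemma imset_fiber_stable (T : finType) (P : eqType) (f : T -> T) (pi : T -> P)
    (s : P -> P) (p : P) (x0 : T) :
  injective f -> (forall x, pi (f x) = s (pi x)) -> pi x0 = p ->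
  (f @: [set x | pi x == p] == [set x | pi x == p]) = (s p == p).
Proof.
move=> f_inj pi_f pi_x0; apply/eqP/eqP => [fixed | sp].
  have : f x0 \in [set x | pi x == p] by rewrite -fixed mem_imset // inE pi_x0.
  by rewrite inE pi_f pi_x0 => /eqP.
apply/eqP; rewrite eqEcard card_imset // leqnn andbT.
apply/subsetP => _ /imsetP[x px ->]; move: px.
by rewrite !inE pi_f => /eqP->; rewrite sp.
Qed.

Lemma rev_ord_ltn_half m (i : 'I_(2 * m)) : (rev_ord i < m)%N = (m <= i)%N.
Proof. by have := ltn_ord i; rewrite /= -ltnS; lia. Qed.

Lemma half_leq_rev_ord m (i : 'I_(2 * m)) : (m <= rev_ord i)%N = (i < m)%N.
Proof. by rewrite leqNgt rev_ord_ltn_half -ltnNge. Qed.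

Definition hflip_partition (p : nat * nat * nat * nat) :=
  let: (a, b, c, d) := p in (d, c, b, a).

Definition vflip_partition (p : nat * nat * nat * nat) :=
  let: (a, b, c, d) := p in (b, a, d, c).

Definition rot_partition (p : nat * nat * nat * nat) :=
  let: (a, b, c, d) := p in (c, d, a, b).

Lemma hflip_partition_fixed a b c d :
  (hflip_partition (a, b, c, d) == (a, b, c, d)) = (a == d) && (b == c).
Proof. by apply/eqP/andP => [[-> ->] | [/eqP-> /eqP->]]. Qed.

Lemma vflip_partition_fixed a b c d :
  (vflip_partition (a, b, c, d) == (a, b, c, d)) = (a == b) && (c == d).
Proof. by apply/eqP/andP => [[-> _ ->] | [/eqP-> /eqP->]]. Qed.

Lemma rot_partition_fixed a b c d :
  (rot_partition (a, b, c, d) == (a, b, c, d)) = (a == c) && (b == d).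
Proof. by apply/eqP/andP => [[-> ->] | [/eqP-> /eqP->]]. Qed.

Section Grid.
Variables k l : nat.
Local Notation H := (Hs k l).
Local Notation V := (Vs k l).
Local Notation R := (R180 k l).

Lemma Hs_involutive : H * H = 1.
Proof. by apply/permP => -[i j]; rewrite perm1 permM !permE /hflip /= rev_ordK. Qed.

Lemma Vs_involutive : V * V = 1.
Proof. by apply/permP => -[i j]; rewrite perm1 permM !permE /vflip /= rev_ordK. Qed.

Lemma commute_Hs_Vs : commute H V.
Proof. by apply/permP => c; rewrite !permM !permE. Qed.

Lemma R180_involutive : R * R = 1.
Proof.
by rewrite /R180 mulgA -(mulgA H) -commute_Hs_Vs mulgA Hs_involutive mul1g Vs_involutive.
Qed.

Lemma HV_klein : HV k l = [set 1; H; V; R].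
Proof. exact: gen_klein Hs_involutive Vs_involutive commute_Hs_Vs. Qed.

Lemma preimset_Hs_quadrants :
  [/\ H @^-1: Q1 k l = Q4 k l, H @^-1: Q2 k l = Q3 k l,
      H @^-1: Q3 k l = Q2 k l & H @^-1: Q4 k l = Q1 k l].
Proof.
by split; apply/setP => c; rewrite !inE permE /= ?rev_ord_ltn_half ?half_leq_rev_ord.
Qed.

Lemma preimset_Vs_quadrants :
  [/\ V @^-1: Q1 k l = Q2 k l, V @^-1: Q2 k l = Q1 k l,
      V @^-1: Q3 k l = Q4 k l & V @^-1: Q4 k l = Q3 k l].
Proof.
by split; apply/setP => c; rewrite !inE permE /= ?rev_ord_ltn_half ?half_leq_rev_ord.
Qed.

Lemma board_partition_Hs B :
  board_partition (act_board H B) = hflip_partition (board_partition B).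
Proof.
rewrite /board_partition /act_board !(card_imsetI_preimset perm_inj).
by have [-> -> -> ->] := preimset_Hs_quadrants.
Qed.

Lemma board_partition_Vs B :
  board_partition (act_board V B) = vflip_partition (board_partition B).
Proof.
rewrite /board_partition /act_board !(card_imsetI_preimset perm_inj).
by have [-> -> -> ->] := preimset_Vs_quadrants.
Qed.

Lemma act_boardM (g h : {perm cell k l}) B :
  act_board (g * h) B = act_board h (act_board g B).
Proof. by rewrite /act_board -imset_comp; apply: eq_imset => c; rewrite permM. Qed.

Lemma board_partition_R180 B :
  board_partition (act_board R B) = rot_partition (board_partition B).
Proof.
rewrite act_boardM board_partition_Vs board_partition_Hs.
by case: (board_partition B) => [[[]]].
Qed.

Lemma act_board1 (B : board k l) : act_board 1 B = B.
Proof. by rewrite /act_board (eq_imset _ (@perm1 _)) imset_id. Qed.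

Lemma act_board_inj (g : {perm cell k l}) : injective (act_board g).
Proof. exact/imset_inj/perm_inj. Qed.

Hypotheses (k_gt0 : (0 < k)%N) (l_gt0 : (0 < l)%N).

Let corner : cell k l :=
  (Ordinal (leq_trans k_gt0 (leq_pmull k (isT : (0 < 2)%N))),
   Ordinal (leq_trans l_gt0 (leq_pmull l (isT : (0 < 2)%N)))).

Lemma Hs_neq1 : H != 1.
Proof. by apply/eqP => /permP/(_ corner); rewrite perm1 permE => -[]; lia. Qed.

Lemma Vs_neq1 : V != 1.
Proof. by apply/eqP => /permP/(_ corner); rewrite perm1 permE => -[]; lia. Qed.

Lemma Hs_neq_Vs : H != V.
Proof. by apply/eqP => /permP/(_ corner); rewrite !permE => -[]; lia. Qed.

Lemma R180_neq1 : R != 1.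
Proof. exact: mulg_involution_neq1 Hs_involutive Hs_neq_Vs. Qed.

Lemma card_HV : #|HV k l| = 4.
Proof. by rewrite HV_klein card_klein ?Hs_involutive ?Hs_neq1 ?Vs_neq1 ?Hs_neq_Vs. Qed.

Lemma indexg_HV_cycle g : g \in [set H; V; R] -> #|HV k l : <[g]>| = 2.
Proof.
rewrite !inE -orbA => /or3P[] /eqP->; apply: indexg_involution_cycle card_HV;
  rewrite ?Hs_involutive ?Vs_involutive ?R180_involutive ?Hs_neq1 ?Vs_neq1 ?R180_neq1 //;
  by rewrite /= -/(HV k l) HV_klein !inE eqxx ?orbT.
Qed.

Section Stabilizer.
Variables (B : board k l) (l1 l2 l3 l4 : nat).
Hypothesis partB : board_partition B = (l1, l2, l3, l4).
Local Notation K := (Kstab k l (l1, l2, l3, l4)).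

Lemma mem_Kstab g :
  (g \in K) = [|| g == 1, (g == H) && [&& l1 == l4 & l2 == l3],
                  (g == V) && [&& l1 == l2 & l3 == l4] |
                  (g == R) && [&& l1 == l3 & l2 == l4]].
Proof.
rewrite inE HV_klein !inE -!orbA !andb_orl /boards_with_partition.
congr [|| _, _, _ | _]; case: eqP => // ->.
- by rewrite (eq_imset _ act_board1) imset_id eqxx.
- by rewrite (imset_fiber_stable (@act_board_inj H) (@board_partition_Hs) partB)
    hflip_partition_fixed.
- by rewrite (imset_fiber_stable (@act_board_inj V) (@board_partition_Vs) partB)
    vflip_partition_fixed.
- by rewrite (imset_fiber_stable (@act_board_inj R) (@board_partition_R180) partB)
    rot_partition_fixed.
Qed.

Lemma Kstab_full : l1 = l2 -> l2 = l3 -> l3 = l4 -> K = HV k l.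
Proof.
move=> e12 e23 e34; apply/setP => g.
by rewrite mem_Kstab -e34 -e23 -e12 HV_klein !inE !eqxx !andbT -!orbA.
Qed.

Lemma Kstab_Vs : l1 = l2 -> l3 = l4 -> l1 != l3 -> K = <[V]>.
Proof.
move=> e12 e34 /negbTE ne13; apply/setP => g.
rewrite mem_Kstab -e12 -e34 cycle_involution ?Vs_involutive ?Vs_neq1 //.
by rewrite !inE !eqxx ne13 !andbF !andbT orbF.
Qed.

Lemma Kstab_R180 : l1 = l3 -> l2 = l4 -> l1 != l2 -> K = <[R]>.
Proof.
move=> e13 e24 ne12; apply/setP => g.
rewrite mem_Kstab -e13 -e24 cycle_involution ?R180_involutive ?R180_neq1 //.
by rewrite !inE !eqxx (negbTE ne12) !andbF !andbT.
Qed.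

Lemma Kstab_Hs : l1 = l4 -> l2 = l3 -> l1 != l2 -> K = <[H]>.
Proof.
move=> e14 e23 ne12; apply/setP => g.
rewrite mem_Kstab -e14 -e23 cycle_involution ?Hs_involutive ?Hs_neq1 //.
by rewrite !inE !eqxx (negbTE ne12) !andbF !andbT !orbF.
Qed.

Lemma Kstab_trivial :
  ~~ [&& l1 == l4 & l2 == l3] -> ~~ [&& l1 == l2 & l3 == l4] ->
  ~~ [&& l1 == l3 & l2 == l4] -> K = 1.
Proof.
move=> /negbTE nH /negbTE nV /negbTE nR; apply/setP => g.
by rewrite mem_Kstab nH nV nR !andbF !orbF !inE.
Qed.

End Stabilizer.

End Grid.

Theorem corollary4p6 (k l r : nat) :
  (1 <= k)%N -> (1 <= l)%N -> k <> l -> (1 <= r <= 4 * k * l)%N ->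
  forall B : board k l, in_Bbar r B ->
  forall l1 l2 l3 l4 : nat, board_partition B = (l1, l2, l3, l4) ->
  let K := Kstab k l (l1, l2, l3, l4) in
  let G := HV k l in
  [/\ (l1 = l2 /\ l2 = l3 /\ l3 = l4) ->
        K = G /\ #|G : K| = 1%N,
      (l1 = l2 /\ (l2 > l3)%N /\ l3 = l4) ->
        K = <[Vs k l]> /\ #|G : K| = 2%N,
      (l1 = l3 /\ (l3 > l2)%N /\ l2 = l4) ->
        K = <[R180 k l]> /\ #|G : K| = 2%N,
      (l1 = l4 /\ (l4 > l2)%N /\ l2 = l3) ->
        K = <[Hs k l]> /\ #|G : K| = 2%N &
      (~ (l1 = l2 /\ l2 = l3 /\ l3 = l4) /\
       ~ (l1 = l2 /\ (l2 > l3)%N /\ l3 = l4) /\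
       ~ (l1 = l3 /\ (l3 > l2)%N /\ l2 = l4) /\
       ~ (l1 = l4 /\ (l4 > l2)%N /\ l2 = l3)) ->
        K = 1 /\ #|G : K| = 4%N].
Proof.
move=> k_gt0 l_gt0 _ _ B /andP[_ normB] l1 l2 l3 l4 partB K G.
move: normB; rewrite partB => /and3P[le21 le31 _].
have cardG : #|G| = 4 := card_HV k_gt0 l_gt0.
split.
- by move=> [e12 [e23 e34]]; rewrite /K (Kstab_full partB) // indexgg.
- move=> [e12 [lt32 e34]].
  rewrite /K (Kstab_Vs k_gt0 l_gt0 partB) //; last by apply/eqP; lia.
  by rewrite indexg_HV_cycle // !inE eqxx orbT.
- move=> [e13 [lt23 e24]].
  rewrite /K (Kstab_R180 k_gt0 l_gt0 partB) //; last by apply/eqP; lia.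
  by rewrite indexg_HV_cycle // !inE eqxx !orbT.
- move=> [e14 [lt24 e23]].
  rewrite /K (Kstab_Hs k_gt0 l_gt0 partB) //; last by apply/eqP; lia.
  by rewrite indexg_HV_cycle // !inE eqxx.
- move=> [nall [nV [nR nH]]].
  rewrite /K (Kstab_trivial partB) ?indexg1 //; apply/andP => -[/eqP ? /eqP ?]; lia.
Qed.
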